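(* Let $A,B$ be elementary algebras. The vector space $A\otimes_k B$ with the bilinear multiplication determined by $$(a\otimes b)\cdot(a'\otimes b')=aa'\otimes b_1b'+aa'_1\otimes b_2b'=aa'\otimes bb'-aa'_2\otimes b_2b'\qquad(a,a'\in A,\ b,b'\in B)$$ is an associative unital $k$-algebra (with unit $1\otimes 1$).
   Context: $k$ is a field; algebras are finite-dimensional associative unital $k$-algebras. An algebra is elementary if all its simple modules are one-dimensional. For an elementary algebra $A$, $\mathrm{rad}(A)$ is its Jacobson radical and $\bar A$ is a fixed subalgebra of $A$ with $A=\bar A\oplus\mathrm{rad}(A)$ as vector spaces (so $\bar A\cong A/\mathrm{rad}(A)$ is a product of copies of $k$; e.g. the span of the trivial paths when $A$ is given by a quiver with relations). For $a\in A$ write $a=a_1+a_2$ with $a_1\in\bar A$, $a_2\in\mathrm{rad}(A)$; similarly $b=b_1+b_2$ for $b\in B$. This algebra is called the trivially twisted tensor product and denoted $A\otimes_0 B$. *)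

From HB Require Import structures.
From mathcomp Require Import all_boot all_order all_algebra all_field.
Set Implicit Arguments. Unset Strict Implicit. Unset Printing Implicit Defensive.
Import GRing.Theory.
Local Open Scope ring_scope.

(* A finite-dimensional (right) A-module of dimension n, given as a unital
   algebra representation rho : A -> 'M[K]_n acting on row vectors
   (v . a := v *m rho a). *)
Definition is_rep (K : fieldType) (A : falgType K) (n : nat)
    (rho : A -> 'M[K]_n) : Prop :=
  linear rho /\ rho 1 = 1%:M /\ (forall x y, rho (x * y) = rho x *m rho y).

Definition simple_rep (K : fieldType) (A : falgType K) (n : nat)
    (rho : A -> 'M[K]_n) : Prop :=
  is_rep rho /\ (0 < n)%N /\
  (forall U : 'M[K]_n, (forall a, stablemx U (rho a)) ->
     U = 0 \/ row_full U).

Definition jrad (K : fieldType) (A : falgType K) (x : A) : Prop :=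
  forall (n : nat) (rho : A -> 'M[K]_n), simple_rep rho -> rho x = 0.

Definition elementary (K : fieldType) (A : falgType K) : Prop :=
  forall (n : nat) (rho : A -> 'M[K]_n), simple_rep rho -> n = 1%N.

(* Concrete model of A (x)_k B: matrices of coordinates w.r.t. fixed bases. *)
Definition tensT (K : fieldType) (A B : falgType K) :=
  'M[K]_(\dim (fullv : {vspace A}), \dim (fullv : {vspace B})).

Definition tens (K : fieldType) (A B : falgType K) (a : A) (b : B) : tensT A B :=
  \matrix_(i, j) (coord (vbasis fullv) i a * coord (vbasis fullv) j b).

From HB Require Import structures.
From mathcomp Require Import all_boot all_order all_algebra all_field.
Set Implicit Arguments. Unset Strict Implicit. Unset Printing Implicit Defensive.
Import GRing.Theory.
Local Open Scope ring_scope.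

(** Since the radical is a two-sided ideal, the projection [p] of an algebra
    onto the complementary subalgebra is an idempotent algebra homomorphism,
    and [q = 1 - p] satisfies [p (p x * y) = p x * p y], [q (p x * y) = p x * q y],
    [p (q x * y) = 0] and [q (q x * y) = q x * y].  With these four identities
    the two ways of bracketing a triple product of pure tensors expand to the
    same four terms.  The product is the bilinear extension of its values on
    pure tensors, so associativity and the unit laws need only be checked
    there. *)

Section LinearFun.
Variables (K : fieldType) (U W : lmodType K) (f : U -> W).
Hypothesis f_lin : linear f.

Lemma linear_fun_sum I (r : seq I) (P : pred I) (F : I -> U) :
  f (\sum_(i <- r | P i) F i) = \sum_(i <- r | P i) f (F i).
Proof.
have [_ fD] := GRing.semilinear_linear f_lin.
apply: (big_morph f fD).
by rewrite -(subrr (0 : U)) (GRing.zmod_morphism_linear f_lin) subrr.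
Qed.

End LinearFun.

Lemma linear_coord_vbasis (K : fieldType) (V : vectType K) (W : lmodType K)
    (f : V -> W) : linear f -> forall v : V,
  f v = \sum_i coord (vbasis fullv) i v *: f (vbasis fullv)`_i.
Proof.
move=> f_lin v; rewrite {1}(coord_vbasis (memvf v)) linear_fun_sum //.
by apply: eq_bigr => i _; rewrite (GRing.scalable_linear f_lin).
Qed.

Section Tensor.
Variables (K : fieldType) (A B : falgType K).
Local Notation eA := (vbasis (fullv : {vspace A})).
Local Notation eB := (vbasis (fullv : {vspace B})).

Lemma tensDl (x y : A) (b : B) : tens (x + y) b = tens x b + tens y b.
Proof. by apply/matrixP => i j; rewrite !mxE linearD /= mulrDl. Qed.

Lemma tensZl c (x : A) (b : B) : tens (c *: x) b = c *: tens x b.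
Proof. by apply/matrixP => i j; rewrite !mxE linearZ /= mulrA. Qed.

Lemma tensBl (x y : A) (b : B) : tens (x - y) b = tens x b - tens y b.
Proof. by apply/matrixP => i j; rewrite !mxE linearB /= mulrBl. Qed.

Lemma tensDr (a : A) (x y : B) : tens a (x + y) = tens a x + tens a y.
Proof. by apply/matrixP => i j; rewrite !mxE linearD /= mulrDr. Qed.

Lemma tensZr c (a : A) (x : B) : tens a (c *: x) = c *: tens a x.
Proof. by apply/matrixP => i j; rewrite !mxE linearZ /= mulrCA. Qed.

Lemma tensr0 (a : A) : tens a (0 : B) = 0.
Proof. by apply/matrixP => i j; rewrite !mxE linear0 mulr0. Qed.

Lemma tens_vbasis (i : 'I_(\dim (fullv : {vspace A})))
    (j : 'I_(\dim (fullv : {vspace B}))) :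
  tens eA`_i eB`_j = delta_mx i j.
Proof.
apply/matrixP => i' j'; rewrite !mxE !coord_free ?(basis_free (vbasisP fullv)) //.
by rewrite -natrM mulnb eq_sym [j == _]eq_sym.
Qed.

Section Lift.
Variable W : lmodType K.

Definition tens_lift (g : A -> B -> W) (X : tensT A B) : W :=
  \sum_i \sum_j X i j *: g eA`_i eB`_j.

Lemma tens_lift_linear g : linear (tens_lift g).
Proof.
move=> c X Y; rewrite /tens_lift scaler_sumr -big_split; apply: eq_bigr => i _.
rewrite scaler_sumr -big_split; apply: eq_bigr => j _.
by rewrite !mxE scalerDl scalerA.
Qed.

Lemma eq_tens_lift g h : (forall a b, g a b = h a b) -> tens_lift g =1 tens_lift h.
Proof.
by move=> eq_gh X; apply: eq_bigr => i _; apply: eq_bigr => j _; rewrite eq_gh.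
Qed.

Lemma tens_liftZD c g h X :
  tens_lift (fun a b => c *: g a b + h a b) X
  = c *: tens_lift g X + tens_lift h X.
Proof.
rewrite /tens_lift scaler_sumr -big_split; apply: eq_bigr => i _.
rewrite scaler_sumr -big_split; apply: eq_bigr => j _.
by rewrite scalerDr !scalerA mulrC.
Qed.

Lemma tens_lift_tens g :
  (forall b, linear (g^~ b)) -> (forall a, linear (g a)) ->
  forall a b, tens_lift g (tens a b) = g a b.
Proof.
move=> g_linl g_linr a b; rewrite (linear_coord_vbasis (g_linl b)).
apply: eq_bigr => i _; rewrite (linear_coord_vbasis (g_linr _)) scaler_sumr.
by apply: eq_bigr => j _; rewrite mxE scalerA.
Qed.

End Lift.

Lemma linear_tens_lift (W W' : lmodType K) (f : W -> W') g X : linear f ->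
  f (tens_lift g X) = tens_lift (fun a b => f (g a b)) X.
Proof.
move=> f_lin; rewrite linear_fun_sum //; apply: eq_bigr => i _.
rewrite linear_fun_sum //; apply: eq_bigr => j _.
exact: (GRing.scalable_linear f_lin).
Qed.

Lemma tens_lift_id X : tens_lift (@tens K A B) X = X.
Proof.
rewrite [RHS]matrix_sum_delta; apply: eq_bigr => i _; apply: eq_bigr => j _.
by rewrite tens_vbasis.
Qed.

Lemma tens_ext (W : lmodType K) (f g : tensT A B -> W) : linear f -> linear g ->
  (forall a b, f (tens a b) = g (tens a b)) -> f =1 g.
Proof.
move=> f_lin g_lin eq_fg X; rewrite -(tens_lift_id X).
by rewrite !linear_tens_lift //; apply: eq_tens_lift.
Qed.

Lemma tens_assoc (mu : tensT A B -> tensT A B -> tensT A B) :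
  (forall X, linear (mu X)) -> (forall Y, linear (mu^~ Y)) ->
  (forall a b a' b' a'' b'', mu (tens a b) (mu (tens a' b') (tens a'' b''))
                             = mu (mu (tens a b) (tens a' b')) (tens a'' b'')) ->
  associative mu.
Proof.
move=> mu_linr mu_linl mu_tensA.
have muPr X c Y Y' : mu X (c *: Y + Y') = c *: mu X Y + mu X Y' := mu_linr X c Y Y'.
have muPl Y c X X' : mu (c *: X + X') Y = c *: mu X Y + mu X' Y := mu_linl Y c X X'.
have mu_tens2A a b a' b' :
    forall Z, mu (tens a b) (mu (tens a' b') Z) = mu (mu (tens a b) (tens a' b')) Z.
  apply: tens_ext => [c u v | | a'' b'']; rewrite ?muPr //; exact: mu_tensA.
have mu_tens1A a b Z : forall Y, mu (tens a b) (mu Y Z) = mu (mu (tens a b) Y) Z.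
  by apply: tens_ext => [c u v | c u v | a' b']; rewrite ?muPl ?muPr ?mu_tens2A.
by move=> X Y Z; move: X; apply: tens_ext => [c u v | c u v | a b];
  rewrite ?muPl ?mu_tens1A.
Qed.

End Tensor.

Section ProjectionAlongIdeal.
Variables (K : fieldType) (A : falgType K) (S : {aspace A}) (R : {vspace A}).
Hypothesis R_mull : forall x y : A, y \in R -> x * y \in R.
Hypothesis R_mulr : forall x y : A, x \in R -> x * y \in R.
Hypotheses (SR_full : (S + R = fullv)%VS) (SR_direct : (S :&: R = 0)%VS).
Local Notation p := (daddv_pi S R).
Local Notation q := (daddv_pi R S).

Lemma proj_add_compl x : p x + q x = x.
Proof. by apply: daddv_pi_add; rewrite ?SR_full ?memvf. Qed.

Lemma compl_projE x : q x = x - p x.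
Proof. by apply/esym/eqP; rewrite subr_eq addrC proj_add_compl. Qed.

Lemma compl_id u : u \in R -> q u = u.
Proof. by apply: daddv_pi_id; rewrite capvC. Qed.

Lemma proj_ideal u : u \in R -> p u = 0.
Proof.
move=> uR; have := proj_add_compl u; rewrite compl_id //.
by move/(canRL (addrK u)); rewrite subrr.
Qed.

Lemma proj_mul x y : p (x * y) = p x * p y.
Proof.
have x_y_split : x * y = p x * p y + (p x * q y + q x * y).
  by rewrite addrA -mulrDr proj_add_compl -mulrDl proj_add_compl.
have cross_R : p x * q y + q x * y \in R.
  by apply: memvD; [apply: R_mull | apply: R_mulr]; apply: memv_pi.
by rewrite x_y_split linearD /= (proj_ideal cross_R) addr0 daddv_pi_id // memvM ?memv_pi.
Qed.

Lemma proj_mul_proj x y : p (p x * y) = p x * p y.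
Proof. by rewrite proj_mul daddv_pi_proj. Qed.

Lemma compl_mul_proj x y : q (p x * y) = p x * q y.
Proof. by rewrite !compl_projE proj_mul_proj mulrBr. Qed.

Lemma proj_mul_compl x y : p (q x * y) = 0.
Proof. by rewrite proj_ideal ?R_mulr ?memv_pi. Qed.

Lemma compl_mul_compl x y : q (q x * y) = q x * y.
Proof. by rewrite compl_id ?R_mulr ?memv_pi. Qed.

End ProjectionAlongIdeal.

Section RadicalIdeal.
Variables (K : fieldType) (A : falgType K).

Lemma jrad_mull (x y : A) : jrad y -> jrad (x * y).
Proof.
move=> jy n rho rho_simple; have [[_ [_ rhoM]] _] := rho_simple.
by rewrite rhoM jy // mulmx0.
Qed.

Lemma jrad_mulr (x y : A) : jrad x -> jrad (x * y).
Proof.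
move=> jx n rho rho_simple; have [[_ [_ rhoM]] _] := rho_simple.
by rewrite rhoM jx // mul0mx.
Qed.

End RadicalIdeal.

Section TwistedTensorProduct.
Variables (K : fieldType) (A B : falgType K).
Variables (Abar : {aspace A}) (RA : {vspace A}) (Bbar : {aspace B}) (RB : {vspace B}).
Local Notation a1 := (daddv_pi Abar RA).
Local Notation a2 := (daddv_pi RA Abar).
Local Notation b1 := (daddv_pi Bbar RB).
Local Notation b2 := (daddv_pi RB Bbar).

Definition twisted_tens_mul (a : A) (b : B) (a' : A) (b' : B) : tensT A B :=
  tens (a * a') (b1 b * b') + tens (a * a1 a') (b2 b * b').

Definition twisted_mul (X Y : tensT A B) : tensT A B :=
  tens_lift (fun a b => tens_lift (twisted_tens_mul a b) Y) X.

Lemma twisted_tens_mul_linear1 b a' b' : linear (fun a => twisted_tens_mul a b a' b').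
Proof.
move=> c u v; rewrite /twisted_tens_mul /= !mulrDl -!scalerAl !tensDl !tensZl.
by rewrite scalerDr addrACA.
Qed.

Lemma twisted_tens_mul_linear2 a a' b' : linear (fun b => twisted_tens_mul a b a' b').
Proof.
move=> c u v; rewrite /twisted_tens_mul /= !linearP !mulrDl -!scalerAl !tensDr !tensZr.
by rewrite scalerDr addrACA.
Qed.

Lemma twisted_tens_mul_linear3 a b b' : linear (fun a' => twisted_tens_mul a b a' b').
Proof.
move=> c u v; rewrite /twisted_tens_mul /= !linearP !mulrDr -!scalerAr !tensDl !tensZl.
by rewrite scalerDr addrACA.
Qed.

Lemma twisted_tens_mul_linear4 a b a' : linear (twisted_tens_mul a b a').
Proof.
move=> c u v; rewrite /twisted_tens_mul /= !mulrDr -!scalerAr !tensDr !tensZr.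
by rewrite scalerDr addrACA.
Qed.

Lemma twisted_mul_tens a b a' b' :
  twisted_mul (tens a b) (tens a' b') = twisted_tens_mul a b a' b'.
Proof.
rewrite /twisted_mul tens_lift_tens.
- rewrite tens_lift_tens //.
  + exact: twisted_tens_mul_linear3.
  + exact: twisted_tens_mul_linear4.
- move=> y c u v /=; rewrite -tens_liftZD; apply: eq_tens_lift => x0 y0.
  exact: twisted_tens_mul_linear1.
- move=> x c u v /=; rewrite -tens_liftZD; apply: eq_tens_lift => x0 y0.
  exact: twisted_tens_mul_linear2.
Qed.

Lemma twisted_mul_linearl Y : linear (twisted_mul^~ Y).
Proof. exact: tens_lift_linear. Qed.

Lemma twisted_mul_linearr X : linear (twisted_mul X).
Proof.
move=> c Y Z; rewrite /twisted_mul -tens_liftZD; apply: eq_tens_lift => a b.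
exact: tens_lift_linear.
Qed.

Lemma twisted_mulDl Y : {morph twisted_mul^~ Y : X X' / X + X'}.
Proof. exact: (GRing.semilinear_linear (twisted_mul_linearl Y)).2. Qed.

Lemma twisted_mulDr X : {morph twisted_mul X : Y Y' / Y + Y'}.
Proof. exact: (GRing.semilinear_linear (twisted_mul_linearr X)).2. Qed.

Hypothesis RA_mull : forall x y : A, y \in RA -> x * y \in RA.
Hypothesis RA_mulr : forall x y : A, x \in RA -> x * y \in RA.
Hypothesis RB_mull : forall x y : B, y \in RB -> x * y \in RB.
Hypothesis RB_mulr : forall x y : B, x \in RB -> x * y \in RB.
Hypothesis Abar1 : (1 : A) \in (Abar : {vspace A}).
Hypothesis Bbar1 : (1 : B) \in (Bbar : {vspace B}).
Hypotheses (A_full : (Abar + RA = fullv)%VS) (A_direct : (Abar :&: RA = 0)%VS).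
Hypotheses (B_full : (Bbar + RB = fullv)%VS) (B_direct : (Bbar :&: RB = 0)%VS).

Lemma twisted_mul_tensE a b a' b' :
  twisted_mul (tens a b) (tens a' b')
  = tens (a * a') (b * b') - tens (a * a2 a') (b2 b * b').
Proof.
rewrite twisted_mul_tens /twisted_tens_mul.
rewrite -[b in tens _ (b * b')](proj_add_compl B_full B_direct).
rewrite mulrDl tensDr (compl_projE A_full A_direct) mulrBr tensBl opprB -addrA.
by congr (_ + _); rewrite addrC subrK.
Qed.

Lemma twisted_mul_tensA a b a' b' a'' b'' :
  twisted_mul (tens a b) (twisted_mul (tens a' b') (tens a'' b''))
  = twisted_mul (twisted_mul (tens a b) (tens a' b')) (tens a'' b'').
Proof.
rewrite !twisted_mul_tens /twisted_tens_mul twisted_mulDr twisted_mulDl.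
rewrite !twisted_mul_tens /twisted_tens_mul.
rewrite (proj_mul_proj RB_mull RB_mulr B_full B_direct).
rewrite (compl_mul_proj RB_mull RB_mulr B_full B_direct).
rewrite (proj_mul_compl RB_mulr B_full B_direct) (compl_mul_compl RB_mulr B_direct).
rewrite mul0r tensr0 add0r !(proj_mul RA_mull RA_mulr A_full A_direct).
rewrite daddv_pi_proj // !mulrA addrACA -tensDr -mulrDl -mulrDr.
by rewrite (proj_add_compl B_full B_direct).
Qed.

Lemma twisted_mulA : associative twisted_mul.
Proof.
apply: tens_assoc; [exact: twisted_mul_linearr | exact: twisted_mul_linearl |].
exact: twisted_mul_tensA.
Qed.

Lemma twisted_mul1l : left_id (tens 1 1) twisted_mul.
Proof.
apply: (tens_ext (g := id)); [exact: twisted_mul_linearr | by [] | move=> a b /=].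
rewrite twisted_mul_tens /twisted_tens_mul !mul1r (compl_projE B_full B_direct).
by rewrite (daddv_pi_id B_direct Bbar1) subrr mul0r tensr0 addr0 mul1r.
Qed.

Lemma twisted_mul1r : right_id (tens 1 1) twisted_mul.
Proof.
apply: (tens_ext (g := id)); [exact: twisted_mul_linearl | by [] | move=> a b /=].
rewrite twisted_mul_tens /twisted_tens_mul !mulr1 (daddv_pi_id A_direct Abar1) mulr1.
by rewrite -tensDr proj_add_compl.
Qed.

End TwistedTensorProduct.

Theorem mainTheorem3 (K : fieldType) (A B : falgType K)
    (Abar : {aspace A}) (RA : {vspace A})
    (Bbar : {aspace B}) (RB : {vspace B}) :
  elementary A -> elementary B ->
  (forall x : A, x \in RA <-> jrad x) ->
  (forall y : B, y \in RB <-> jrad y) ->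
  (1 : A) \in (Abar : {vspace A}) -> (1 : B) \in (Bbar : {vspace B}) ->
  (Abar + RA = fullv)%VS -> (Abar :&: RA = 0)%VS ->
  (Bbar + RB = fullv)%VS -> (Bbar :&: RB = 0)%VS ->
  let a1 := daddv_pi Abar RA in let a2 := daddv_pi RA Abar in
  let b1 := daddv_pi Bbar RB in let b2 := daddv_pi RB Bbar in
  exists mu : tensT A B -> tensT A B -> tensT A B,
    (forall X, linear (mu X)) /\ (forall Y, linear (fun X => mu X Y)) /\
    (forall (a a' : A) (b b' : B),
        mu (tens a b) (tens a' b')
        = tens (a * a') (b1 b * b') + tens (a * a1 a') (b2 b * b')) /\
    (forall (a a' : A) (b b' : B),
        mu (tens a b) (tens a' b')
        = tens (a * a') (b * b') - tens (a * a2 a') (b2 b * b')) /\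
    associative mu /\
    left_id (tens (1 : A) (1 : B)) mu /\ right_id (tens (1 : A) (1 : B)) mu.
Proof.
(* Elementarity only guarantees that such splittings exist; the construction
   uses nothing but the splittings themselves. *)
move=> _ _ RA_jrad RB_jrad Abar1 Bbar1 A_full A_direct B_full B_direct.
have RA_mull (x y : A) : y \in RA -> x * y \in RA.
  by move/RA_jrad=> jy; apply/RA_jrad; exact: jrad_mull.
have RA_mulr (x y : A) : x \in RA -> x * y \in RA.
  by move/RA_jrad=> jx; apply/RA_jrad; exact: jrad_mulr.
have RB_mull (x y : B) : y \in RB -> x * y \in RB.
  by move/RB_jrad=> jy; apply/RB_jrad; exact: jrad_mull.
have RB_mulr (x y : B) : x \in RB -> x * y \in RB.
  by move/RB_jrad=> jx; apply/RB_jrad; exact: jrad_mulr.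
exists (twisted_mul Abar RA Bbar RB).
split; first exact: twisted_mul_linearr.
split; first exact: twisted_mul_linearl.
split; first by move=> a a' b b'; apply: twisted_mul_tens.
split; first by move=> a a' b b'; apply: twisted_mul_tensE.
split; first exact: twisted_mulA.
by split; [apply: twisted_mul1l | apply: twisted_mul1r].
Qed.
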